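(* For any two pre-subgroups $f,f'$ of $V$ there exist pre-subgroups $g,g'$ with $H^f\cap H^{f'}=H^g$ and $H_f\cap H_{f'}=H_{g'}$. Consequently the set of pre-subgroups ordered by $\prec$ is a lattice, with $g=\inf(f,f')$ and $g'=\sup(f,f')$.
   Context: Let $\mathcal H$ be a finite-dimensional Hilbert space and $V$ a multiplicative unitary on $\mathcal H$ ($V_{12}V_{13}V_{23}=V_{23}V_{12}$) of multiplicity 1 (one-dimensional space of fixed vectors $\xi$, i.e. $V(\xi\otimes\eta)=\xi\otimes\eta$ for all $\eta$). Fix a unit fixed vector $e$. A pre-subgroup is $f\in\mathcal H$ with $\|f\|=1$, $\langle f,e\rangle>0$, $V(f\otimes f)=f\otimes f$; $H^f=\{\eta:V(f\otimes\eta)=f\otimes\eta\}$, $H_f=\{\eta:V(\eta\otimes f)=\eta\otimes f\}$. The partial order $g\prec f$ on pre-subgroups means $V(f\otimes g)=f\otimes g$, equivalently $H^g\subset H^f$, equivalently $H_f\subset H_g$. *)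

From HB Require Import structures.
From mathcomp Require Import all_boot all_order all_algebra.
From mathcomp Require Import sesquilinear spectral.
Set Implicit Arguments. Unset Strict Implicit. Unset Printing Implicit Defensive.
Import Order.TTheory GRing.Theory Num.Theory.
Local Open Scope ring_scope.

(* The finite-dimensional Hilbert space H is C^n (column vectors 'cV[C]_n),
   C an arbitrary numeric algebraically closed field (e.g. the complex
   numbers).  H (x) H is 'cV[C]_(n*n), with the basis vector e_i (x) e_j at
   index [mxvec_index i j]; H (x) H (x) H is 'cV[C]_(n*n*n), with
   e_a (x) e_b (x) e_c at index [mxvec_index (mxvec_index a b) c]. *)

(* inner product <u, v> (linear in u, antilinear in v) *)
Definition ip (C : numClosedFieldType) n (u v : 'cV[C]_n) : C :=
  dotmx (u ^T) (v ^T).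

Definition tens (C : numClosedFieldType) n (x y : 'cV[C]_n) : 'cV[C]_(n * n) :=
  (mxvec (x *m y ^T)) ^T.

Definition unvec m n (k : 'I_(m * n)) : 'I_m * 'I_n :=
  enum_val (cast_ord (esym (mxvec_cast m n)) k).

Definition unvec3 n (K : 'I_(n * n * n)) : 'I_n * 'I_n * 'I_n :=
  let: (ab, c) := unvec K in let: (a, b) := unvec ab in (a, b, c).

Definition leg12 (C : numClosedFieldType) n (V : 'M[C]_(n * n)) : 'M[C]_(n * n * n) :=
  \matrix_(K, L) let: (a, b, c) := unvec3 K in let: (a', b', c') := unvec3 L in
     V (mxvec_index a b) (mxvec_index a' b') * (c == c')%:R.
Definition leg13 (C : numClosedFieldType) n (V : 'M[C]_(n * n)) : 'M[C]_(n * n * n) :=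
  \matrix_(K, L) let: (a, b, c) := unvec3 K in let: (a', b', c') := unvec3 L in
     V (mxvec_index a c) (mxvec_index a' c') * (b == b')%:R.
Definition leg23 (C : numClosedFieldType) n (V : 'M[C]_(n * n)) : 'M[C]_(n * n * n) :=
  \matrix_(K, L) let: (a, b, c) := unvec3 K in let: (a', b', c') := unvec3 L in
     V (mxvec_index b c) (mxvec_index b' c') * (a == a')%:R.

Definition multiplicative_unitary (C : numClosedFieldType) n (V : 'M[C]_(n * n)) :=
  V \is unitarymx /\ leg12 V *m leg13 V *m leg23 V = leg23 V *m leg12 V.

Definition fixed_vector (C : numClosedFieldType) n (V : 'M[C]_(n * n)) (xi : 'cV[C]_n) :=
  forall eta : 'cV[C]_n, V *m tens xi eta = tens xi eta.

Definition multiplicity_one (C : numClosedFieldType) n (V : 'M[C]_(n * n)) :=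
  exists2 e : 'cV[C]_n, e != 0 &
    forall xi, fixed_vector V xi <-> exists c : C, xi = c *: e.

Definition pre_subgroup (C : numClosedFieldType) n (V : 'M[C]_(n * n)) (e f : 'cV[C]_n) :=
  [/\ ip f f = 1, 0 < ip f e & V *m tens f f = tens f f].

Definition Hup (C : numClosedFieldType) n (V : 'M[C]_(n * n)) (f eta : 'cV[C]_n) :=
  V *m tens f eta = tens f eta.
Definition Hdown (C : numClosedFieldType) n (V : 'M[C]_(n * n)) (f eta : 'cV[C]_n) :=
  V *m tens eta f = tens eta f.

Definition prec (C : numClosedFieldType) n (V : 'M[C]_(n * n)) (g f : 'cV[C]_n) :=
  V *m tens f g = tens f g.

From HB Require Import structures.
From mathcomp Require Import all_boot all_order all_algebra.
From mathcomp Require Import sesquilinear spectral.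
From mathcomp.algebra_tactics Require Import ring.
From Stdlib Require Import Classical.
Import Order.TTheory GRing.Theory Num.Theory.
Set Implicit Arguments. Unset Strict Implicit. Unset Printing Implicit Defensive.
Local Open Scope ring_scope.
Local Open Scope sesquilinear_scope.

(* For a pre-subgroup h the slices (omega_h (x) id)V and (id (x) omega_h)V are
   the orthogonal projections onto H^h and H_h: the pentagon equation makes
   them idempotent and unitarity makes them self-adjoint.  The vector
   (Tr (x) id)V e is fixed by every slice (omega_h (x) id)V.  Its component a in
   the subspace of those x with H^f /\ H^f' contained in H^x is therefore still
   fixed by the projections for f and f', i.e. a lies in H^f /\ H^f', and
   <a, e> is the trace of the nonzero projection (id (x) omega_e)V, hence
   positive.  Normalising a gives g; the reverse inclusion H^g in H^f /\ H^f'
   is the transitivity of the relation V(x (x) y) = x (x) y, which follows from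
   the pentagon equation.  The supremum g' is obtained dually, as the normalised
   component of e itself in the subspace of those x with H_f /\ H_f'
   contained in H_x. *)

Lemma unvec_mxvec_index p q (i : 'I_p) (j : 'I_q) : unvec (mxvec_index i j) = (i, j).
Proof. by rewrite /unvec /mxvec_index cast_ordK enum_rankK. Qed.

Lemma unvec3_mxvec_index n (a b c : 'I_n) :
  unvec3 (mxvec_index (mxvec_index a b) c) = (a, b, c).
Proof. by rewrite /unvec3 !unvec_mxvec_index. Qed.

Lemma eq_mxvec_index p q (i i' : 'I_p) (j j' : 'I_q) :
  (mxvec_index i j == mxvec_index i' j') = (i == i') && (j == j').
Proof.
apply/eqP/andP => [E|[/eqP -> /eqP ->]] //.
by have := congr1 (@unvec p q) E; rewrite !unvec_mxvec_index => -[-> ->].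
Qed.

Lemma sum_mxvec_index (R : nmodType) p q (G : 'I_(p * q) -> R) :
  \sum_k G k = \sum_i \sum_j G (mxvec_index i j).
Proof.
rewrite pair_bigA /= (reindex (fun x : 'I_p * 'I_q => mxvec_index x.1 x.2)) //=.
exists (fun k => unvec k) => [[x y] _|k _] /=; first by rewrite unvec_mxvec_index.
by case/mxvec_indexP: k => i j; rewrite unvec_mxvec_index.
Qed.

Lemma sum_delta (R : pzSemiRingType) n (G : 'I_n -> R) a :
  \sum_a' G a' * (a == a')%:R = G a.
Proof.
rewrite (bigD1 a) //= eqxx mulr1 big1 ?addr0 // => i /negbTE.
by rewrite eq_sym => ->; rewrite mulr0.
Qed.

Lemma sum_deltaC (R : pzSemiRingType) n (G : 'I_n -> R) a :
  \sum_a' (a' == a)%:R * G a' = G a.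
Proof.
rewrite (bigD1 a) //= eqxx mul1r big1 ?addr0 // => i /negbTE -> ; exact: mul0r.
Qed.

Lemma sum3_rotl (R : nmodType) (I J K : finType) (F : I -> J -> K -> R) :
  \sum_x \sum_y \sum_z F x y z = \sum_y \sum_z \sum_x F x y z.
Proof. by rewrite exchange_big; apply: eq_bigr => y _; exact: exchange_big. Qed.

Lemma sum3_rotr (R : nmodType) (I J K : finType) (F : I -> J -> K -> R) :
  \sum_x \sum_y \sum_z F x y z = \sum_z \sum_x \sum_y F x y z.
Proof. by rewrite [LHS]sum3_rotl [LHS]sum3_rotl. Qed.

Lemma sum3_rev (R : nmodType) (I J K : finType) (F : I -> J -> K -> R) :
  \sum_x \sum_y \sum_z F x y z = \sum_z \sum_y \sum_x F x y z.
Proof. by rewrite sum3_rotr; apply: eq_bigr => z _; exact: exchange_big. Qed.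

Lemma sum4_exchange (R : nmodType) (I J K L : finType) (F : I -> J -> K -> L -> R) :
  \sum_x \sum_y \sum_z \sum_w F x y z w = \sum_z \sum_w \sum_x \sum_y F x y z w.
Proof.
rewrite [LHS]pair_bigA [RHS]pair_bigA.
under eq_bigr do rewrite pair_bigA.
under [RHS]eq_bigr do rewrite pair_bigA.
exact: exchange_big.
Qed.

Section InnerProduct.
Variables (C : numClosedFieldType) (n : nat).
Implicit Types (u v w x : 'cV[C]_n) (k : C).

Lemma ipE u v : ip u v = \sum_i u i 0 * (v i 0)^*.
Proof. by rewrite /ip dotmxE mxE; apply: eq_bigr => i _; rewrite !mxE. Qed.

Lemma ip_normE x : ip x x = \sum_i (x i 0)^* * x i 0.
Proof. by rewrite ipE; apply: eq_bigr => i _; rewrite mulrC. Qed.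

Lemma ip_conj u v : ip v u = (ip u v)^*.
Proof.
rewrite !ipE rmorph_sum; apply: eq_bigr => i _.
by rewrite rmorphM /= conjCK mulrC.
Qed.

Lemma ipDl u w v : ip (u + w) v = ip u v + ip w v.
Proof. by rewrite !ipE -big_split; apply: eq_bigr => i _; rewrite !mxE mulrDl. Qed.

Lemma ipZl k u v : ip (k *: u) v = k * ip u v.
Proof. by rewrite !ipE mulr_sumr; apply: eq_bigr => i _; rewrite !mxE mulrA. Qed.

Lemma ipDr u w v : ip v (u + w) = ip v u + ip v w.
Proof. by rewrite ip_conj ipDl rmorphD /= -!ip_conj. Qed.

Lemma ipZr k u v : ip v (k *: u) = k^* * ip v u.
Proof. by rewrite ip_conj ipZl rmorphM /= -ip_conj. Qed.

Lemma ip0l v : ip 0 v = 0.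
Proof. by rewrite -(scale0r 0) ipZl mul0r. Qed.

Lemma ipBl u w v : ip (u - w) v = ip u v - ip w v.
Proof. by rewrite ipDl -scaleN1r ipZl mulN1r. Qed.

Lemma ip_adjoint (M : 'M[C]_n) x y : ip (M *m x) y = ip x (M^t* *m y).
Proof.
rewrite !ipE.
under eq_bigr do rewrite mxE big_distrl.
under [RHS]eq_bigr do rewrite mxE rmorph_sum big_distrr.
rewrite exchange_big; apply: eq_bigr => i _; apply: eq_bigr => j _ /=.
by rewrite !mxE rmorphM /= conjCK; ring.
Qed.

Lemma ip_ge0 x : 0 <= ip x x.
Proof. by rewrite ipE; apply: sumr_ge0 => i _; rewrite mul_conjC_ge0. Qed.

Lemma ip_eq0 x : ip x x = 0 -> x = 0.
Proof.
rewrite ipE => /psumr_eq0P H; apply/colP => i; rewrite mxE.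
have /eqP := H (fun i _ => mul_conjC_ge0 (x i 0)) i isT.
by rewrite mul_conjC_eq0 => /eqP.
Qed.

Lemma ip_gt0 x : x != 0 -> 0 < ip x x.
Proof. by move=> x0; rewrite lt_def ip_ge0 andbT; apply: contraNneq x0 => /ip_eq0 ->. Qed.

Lemma ip_normalize u v : 0 < ip u v ->
  exists c : C, ip (c *: u) (c *: u) = 1 /\ 0 < ip (c *: u) v.
Proof.
move=> uv_gt0; have u0 : u != 0 by apply: contraTneq uv_gt0 => ->; rewrite ip0l ltxx.
have uu_gt0 := ip_gt0 u0; have s_gt0 : 0 < sqrtC (ip u u) by rewrite sqrtC_gt0.
exists (sqrtC (ip u u))^-1; split; last by rewrite ipZl mulr_gt0 // invr_gt0.
rewrite ipZl ipZr geC0_conj ?invr_ge0 ?ltW // mulrA -invfM -expr2 sqrtCK.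
by rewrite mulVf // gt_eqF.
Qed.

Definition lin_closed (P : 'cV[C]_n -> Prop) :=
  P 0 /\ forall k x y, P x -> P y -> P (k *: x + y).

Lemma lin_closed_rowspace P : lin_closed P ->
  exists U : 'M[C]_n, forall x, P x <-> (x^T <= U)%MS.
Proof.
move=> [P0 PL].
(* Enlarge [U] by vectors of [P] outside it; its rank cannot exceed [n]. *)
suff : forall m, exists U : 'M[C]_n, (forall x, (x^T <= U)%MS -> P x) /\
   ((m <= \rank U)%N \/ (forall x, P x -> (x^T <= U)%MS)).
  case/(_ n.+1) => U [UP [|PU]]; first by rewrite ltnNge rank_leq_col.
  by exists U => x; split; [apply: PU | apply: UP].
elim => [|m [U [UP U_large]]].
  exists 0; split; last by left.
  by move=> x; rewrite submx0 => /eqP x0; rewrite -[x]trmxK x0 trmx0.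
have [PU|[x [Px xNU]]] : (forall x, P x -> (x^T <= U)%MS) \/
    exists x, P x /\ ~ (x^T <= U)%MS.
  case: (classic (exists x, P x /\ ~ (x^T <= U)%MS)) => [|noX]; [by right|left].
  by move=> x Px; apply: NNPP => xNU; apply: noX; exists x.
  by exists U; split => //; right.
case: U_large => [rkU|]; last by move=> PU; exfalso; exact/xNU/PU.
exists (U + x^T)%MS; split.
  move=> y /sub_addsmxP [[u1 u2] /= Ey].
  have Pu1 : P ((u1 *m U)^T) by apply: UP; rewrite trmxK submxMl.
  have [k Ek] : exists k, u2 *m x^T = k *: x^T by apply/sub_rVP; rewrite submxMl.
  have -> : y = k *: x + (u1 *m U)^T.
    by rewrite -[y]trmxK Ey Ek linearD /= linearZ /= trmxK addrC.
  exact: PL.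
left; apply: leq_ltn_trans rkU _; apply: rank_ltmx.
rewrite ltmxErank addsmxSl /= (ltn_leqif (mxrank_leqif_sup (addsmxSl U x^T))).
by apply/negP => /(submx_trans (addsmxSr U x^T)).
Qed.

Lemma orthogonal_decomposition P : lin_closed P ->
  forall v, exists a a', [/\ v = a + a', P a & forall x, P x -> ip a' x = 0].
Proof.
move=> /lin_closed_rowspace [U PU] v; pose r := v^T.
exists (r *m proj_ortho U)^T, (r - r *m proj_ortho U)^T; split.
- by rewrite -linearD /= addrC subrK trmxK.
- by apply/PU; rewrite trmxK proj_ortho_sub.
move=> x /PU /submxP [z xU]; have /orthomx1P ortho := proj_ortho_compl_sub U r.
by rewrite /ip dotmxE xU [X in X *m _]trmxK trmx_mul map_mxM mulmxA ortho mul0mx mxE.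
Qed.

(* A self-adjoint [E] preserving [P] also preserves its orthogonal complement,
   so it fixes the [P]-component of every vector it fixes. *)
Lemma selfadj_fix_component P (E : 'M[C]_n) : lin_closed P -> E^t* = E ->
  (forall x, P x -> P (E *m x)) ->
  forall a a', P a -> (forall x, P x -> ip a' x = 0) ->
  E *m (a + a') = a + a' -> E *m a = a.
Proof.
move=> [_ PL] Es EP a a' Pa a'_perp Efix; pose d := E *m a - a.
have Pd : P d by rewrite /d addrC -scaleN1r; apply: PL => //; apply: EP.
have d_perp x : P x -> ip d x = 0.
  move=> Px; have -> : d = a' - E *m a'.
    by apply/eqP; rewrite -subr_eq0 /d opprB addrACA -opprD -mulmxDr Efix subrr.
  by rewrite ipBl ip_adjoint Es !a'_perp ?subrr //; apply: EP.
by apply/eqP; rewrite -subr_eq0; apply/eqP/ip_eq0/d_perp.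
Qed.

Lemma col_mulmx m p q j (A : 'M[C]_(m, p)) (B : 'M[C]_(p, q)) :
  col j (A *m B) = A *m col j B.
Proof. by rewrite !colE mulmxA. Qed.

Lemma mulmx_idem (M : 'M[C]_n) :
  (forall x : 'cV[C]_n, M *m (M *m x) = M *m x) -> M *m M = M.
Proof.
move=> H; apply/matrixP => i j; have := H (col j 1%:M).
by rewrite !mulmxA -!col_mulmx !mulmx1 => /colP /(_ i); rewrite !mxE.
Qed.

Lemma selfadj_idem (T : 'M[C]_n) : T *m T = T ->
  (forall x, T *m x = x -> T^t* *m x = x) -> T^t* = T.
Proof.
move=> TT H.
have E : T^t* *m T = T.
  apply/matrixP => i j; have := H (col j T); rewrite -col_mulmx TT => /(_ erefl).
  by rewrite -col_mulmx => /colP /(_ i); rewrite !mxE.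
have : (T^t* *m T)^t* = T^t* by rewrite E.
by rewrite trmx_mul map_mxM trmxCK E.
Qed.

Lemma mxtrace_proj_gt0 (M : 'M[C]_n) : M^t* = M -> M *m M = M -> M != 0 -> 0 < \tr M.
Proof.
move=> Ms MM M0.
have -> : \tr M = \sum_i \sum_j (M j i)^* * M j i.
  rewrite -{1}MM -{1}Ms /mxtrace; apply: eq_bigr => i _; rewrite mxE.
  by apply: eq_bigr => j _; rewrite !mxE.
have term_ge0 (z : C) : 0 <= z^* * z by rewrite mulrC mul_conjC_ge0.
have col_ge0 i : 0 <= \sum_j (M j i)^* * M j i by apply: sumr_ge0.
rewrite lt_def sumr_ge0 ?andbT //; apply/eqP => /psumr_eq0P tr0.
move/eqP: M0; apply; apply/matrixP => j i; rewrite mxE.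
have /psumr_eq0P coli0 := tr0 (fun i _ => col_ge0 i) i isT.
have /eqP := coli0 (fun l _ => term_ge0 (M l i)) j isT.
by rewrite mulrC mul_conjC_eq0 => /eqP.
Qed.

End InnerProduct.

Section Tensor.
Variables (C : numClosedFieldType) (n : nat).
Implicit Types (x y w : 'cV[C]_n) (k : C).

Lemma tensDl x y w : tens (x + y) w = tens x w + tens y w.
Proof. by rewrite /tens mulmxDl !linearD. Qed.

Lemma tensZl k x w : tens (k *: x) w = k *: tens x w.
Proof. by rewrite /tens -scalemxAl !linearZ. Qed.

Lemma tensDr x y w : tens w (x + y) = tens w x + tens w y.
Proof. by rewrite /tens linearD mulmxDr !linearD. Qed.

Lemma tensZr k x w : tens w (k *: x) = k *: tens w x.
Proof. by rewrite /tens linearZ -scalemxAr !linearZ. Qed.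

Lemma tens0l w : tens 0 w = 0.
Proof. by rewrite -(scale0r (0 : 'cV[C]_n)) tensZl scale0r. Qed.

Lemma tens0r w : tens w 0 = 0.
Proof. by rewrite -(scale0r (0 : 'cV[C]_n)) tensZr scale0r. Qed.
End Tensor.

Section MultiplicativeUnitary.
Variables (C : numClosedFieldType) (n : nat) (V : 'M[C]_(n * n)).
Hypothesis V_unitary : V \is unitarymx.
Hypothesis V_pentagon : leg12 V *m leg13 V *m leg23 V = leg23 V *m leg12 V.

Local Notation I := 'I_n.
Local Notation ix := (@mxvec_index n n).
Local Notation kernel := (I -> I -> I -> I -> C).
Local Notation tensor2 := (I -> I -> C).
Local Notation tensor3 := (I -> I -> I -> C).

(* Vectors of H (x) H and H (x) H (x) H are handled through their coordinate
   functions [tensor2] and [tensor3]; [Vcoef] and [Vadj] are the kernels of [V]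
   and [V^*] in the basis [e_a (x) e_b], and [act12], [act13], [act23] apply a
   kernel to the indicated legs. *)
Definition Vcoef : kernel := fun a b a' b' => V (ix a b) (ix a' b').
Definition Vadj : kernel := fun a b a' b' => (V (ix a' b') (ix a b))^*.

Definition act (M : kernel) (G : tensor2) a b := \sum_a' \sum_b' M a b a' b' * G a' b'.
Definition act12 (M : kernel) (F : tensor3) a b c := \sum_a' \sum_b' M a b a' b' * F a' b' c.
Definition act13 (M : kernel) (F : tensor3) a b c := \sum_a' \sum_c' M a c a' c' * F a' b c'.
Definition act23 (M : kernel) (F : tensor3) a b c := \sum_b' \sum_c' M b c b' c' * F a b' c'.

Definition tcoef (x y : 'cV[C]_n) : tensor2 := fun a b => x a 0 * y b 0.

Definition col3 (F : tensor3) : 'cV[C]_(n * n * n) :=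
  \col_K let: (a, b, c) := unvec3 K in F a b c.

Lemma col3E F a b c : col3 F (mxvec_index (ix a b) c) 0 = F a b c.
Proof. by rewrite /col3 mxE unvec3_mxvec_index. Qed.

Lemma sum_mxvec_index3 (G : 'I_(n * n * n) -> C) :
  \sum_K G K = \sum_a \sum_b \sum_c G (mxvec_index (ix a b) c).
Proof. by rewrite !sum_mxvec_index; apply: eq_bigr => a _; apply: eq_bigr. Qed.

Lemma leg12_col3 F : leg12 V *m col3 F = col3 (act12 Vcoef F).
Proof.
apply/colP => K; case/mxvec_indexP: K => ab c; case/mxvec_indexP: ab => a b.
rewrite col3E mxE sum_mxvec_index3 /act12; apply: eq_bigr => a' _; apply: eq_bigr => b' _.
under eq_bigr do rewrite col3E mxE !unvec3_mxvec_index /= mulrAC.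
exact: sum_delta.
Qed.

Lemma leg13_col3 F : leg13 V *m col3 F = col3 (act13 Vcoef F).
Proof.
apply/colP => K; case/mxvec_indexP: K => ab c; case/mxvec_indexP: ab => a b.
rewrite col3E mxE sum_mxvec_index3 /act13; apply: eq_bigr => a' _.
rewrite -(sum_delta (fun b' => \sum_c' Vcoef a c a' c' * F a' b' c') b); apply: eq_bigr => b' _.
rewrite big_distrl; apply: eq_bigr => c' _.
by rewrite col3E mxE !unvec3_mxvec_index /= mulrAC.
Qed.

Lemma leg23_col3 F : leg23 V *m col3 F = col3 (act23 Vcoef F).
Proof.
apply/colP => K; case/mxvec_indexP: K => ab c; case/mxvec_indexP: ab => a b.
rewrite col3E mxE sum_mxvec_index3 /act23.
rewrite -(sum_delta (fun a' => \sum_b' \sum_c' Vcoef b c b' c' * F a' b' c') a).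
apply: eq_bigr => a' _; rewrite big_distrl; apply: eq_bigr => b' _.
rewrite big_distrl; apply: eq_bigr => c' _.
by rewrite col3E mxE !unvec3_mxvec_index /= mulrAC.
Qed.

Lemma pentagon F a b c :
  act12 Vcoef (act13 Vcoef (act23 Vcoef F)) a b c = act23 Vcoef (act12 Vcoef F) a b c.
Proof.
rewrite -!col3E -!leg12_col3 -leg13_col3 -!leg23_col3 -leg12_col3.
by rewrite !mulmxA V_pentagon.
Qed.

Lemma tens_coef (x y : 'cV[C]_n) a b : tens x y (ix a b) 0 = tcoef x y a b.
Proof. by rewrite /tens mxE mxvecE mxE big_ord1 mxE. Qed.

Lemma HupP (x y : 'cV[C]_n) :
  Hup V x y <-> forall a b, act Vcoef (tcoef x y) a b = tcoef x y a b.
Proof.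
have coefE a b : (V *m tens x y) (ix a b) 0 = act Vcoef (tcoef x y) a b.
  rewrite mxE sum_mxvec_index; apply: eq_bigr => a' _; apply: eq_bigr => b' _.
  by rewrite tens_coef.
split => [xy a b|xy]; first by rewrite -coefE xy tens_coef.
by apply/colP => k; case/mxvec_indexP: k => a b; rewrite coefE xy tens_coef.
Qed.

Lemma Hup0l w : Hup V 0 w.
Proof. by rewrite /Hup tens0l mulmx0. Qed.

Lemma Hup0r w : Hup V w 0.
Proof. by rewrite /Hup tens0r mulmx0. Qed.

Lemma HupDl x y w : Hup V x w -> Hup V y w -> Hup V (x + y) w.
Proof. by rewrite /Hup tensDl mulmxDr => -> ->. Qed.

Lemma HupZl k x w : Hup V x w -> Hup V (k *: x) w.
Proof. by rewrite /Hup tensZl -scalemxAr => ->. Qed.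

Lemma HupDr x y w : Hup V w x -> Hup V w y -> Hup V w (x + y).
Proof. by rewrite /Hup tensDr mulmxDr => -> ->. Qed.

Lemma HupZr k x w : Hup V w x -> Hup V w (k *: x).
Proof. by rewrite /Hup tensZr -scalemxAr => ->. Qed.

Lemma lin_closed_Hupl (W : 'cV[C]_n -> Prop) :
  lin_closed (fun x => forall w, W w -> Hup V x w).
Proof.
by split=> [w _|k x y Px Py w Ww]; [apply: Hup0l | apply: HupDl; [apply: HupZl|]; auto].
Qed.

Lemma lin_closed_Hupr (W : 'cV[C]_n -> Prop) :
  lin_closed (fun x => forall w, W w -> Hup V w x).
Proof.
by split=> [w _|k x y Px Py w Ww]; [apply: Hup0r | apply: HupDr; [apply: HupZr|]; auto].
Qed.

Lemma eq_act M (G G' : tensor2) : (forall a b, G a b = G' a b) ->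
  forall a b, act M G a b = act M G' a b.
Proof. by move=> E a b; apply: eq_bigr => a' _; apply: eq_bigr => b' _; rewrite E. Qed.

Lemma eq_act12 M (F F' : tensor3) : (forall a b c, F a b c = F' a b c) ->
  forall a b c, act12 M F a b c = act12 M F' a b c.
Proof. by move=> E a b c; apply: eq_bigr => a' _; apply: eq_bigr => b' _; rewrite E. Qed.

Lemma eq_act13 M (F F' : tensor3) : (forall a b c, F a b c = F' a b c) ->
  forall a b c, act13 M F a b c = act13 M F' a b c.
Proof. by move=> E a b c; apply: eq_bigr => a' _; apply: eq_bigr => c' _; rewrite E. Qed.

Lemma eq_act23 M (F F' : tensor3) : (forall a b c, F a b c = F' a b c) ->
  forall a b c, act23 M F a b c = act23 M F' a b c.
Proof. by move=> E a b c; apply: eq_bigr => b' _; apply: eq_bigr => c' _; rewrite E. Qed.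

Lemma act12_tensor M (F : tensor3) (G : tensor2) (z : I -> C) :
  (forall a b c, F a b c = G a b * z c) ->
  forall a b c, act12 M F a b c = act M G a b * z c.
Proof.
move=> E a b c; rewrite /act12 /act big_distrl; apply: eq_bigr => a' _.
by rewrite big_distrl; apply: eq_bigr => b' _; rewrite E mulrA.
Qed.

Lemma act13_tensor M (F : tensor3) (G : tensor2) (y : I -> C) :
  (forall a b c, F a b c = G a c * y b) ->
  forall a b c, act13 M F a b c = act M G a c * y b.
Proof.
move=> E a b c; rewrite /act13 /act big_distrl; apply: eq_bigr => a' _.
by rewrite big_distrl; apply: eq_bigr => c' _; rewrite E mulrA.
Qed.

Lemma act23_tensor M (F : tensor3) (G : tensor2) (x : I -> C) :
  (forall a b c, F a b c = x a * G b c) ->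
  forall a b c, act23 M F a b c = x a * act M G b c.
Proof.
move=> E a b c; rewrite /act23 /act big_distrr; apply: eq_bigr => b' _.
by rewrite big_distrr; apply: eq_bigr => c' _; rewrite E mulrCA.
Qed.

Lemma act_comp_id (M N : kernel) :
  (forall a b c d, \sum_a' \sum_b' M a b a' b' * N a' b' c d = ((a == c) && (b == d))%:R) ->
  forall G a b, act M (act N G) a b = G a b.
Proof.
move=> MN G a b.
transitivity (\sum_c \sum_d (\sum_a' \sum_b' M a b a' b' * N a' b' c d) * G c d).
  rewrite /act (eq_bigr (fun a' => \sum_b' \sum_c \sum_d M a b a' b' * N a' b' c d * G c d)).
    rewrite pair_bigA; under eq_bigr do rewrite pair_bigA.
    rewrite [RHS]pair_bigA; under [RHS]eq_bigr do rewrite pair_bigA big_distrl.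
    by rewrite exchange_big.
  move=> a' _; apply: eq_bigr => b' _; rewrite big_distrr; apply: eq_bigr => c _.
  by rewrite big_distrr; apply: eq_bigr => d _; exact: mulrA.
under eq_bigr do under eq_bigr do rewrite MN.
rewrite (bigD1 a) //= (bigD1 b) //= !eqxx mul1r big1 ?addr0; last first.
  by move=> d /negbTE; rewrite eq_sym => ->; rewrite andbF mul0r.
rewrite big1 ?addr0 // => c /negbTE; rewrite eq_sym => ->.
by rewrite big1 // => d _; rewrite mul0r.
Qed.

Lemma Vcoef_Vadj a b c d :
  \sum_a' \sum_b' Vcoef a b a' b' * Vadj a' b' c d = ((a == c) && (b == d))%:R.
Proof.
have := congr1 (fun M : 'M[C]_(n * n) => M (ix a b) (ix c d)) (unitarymxP V_unitary).
rewrite /= mxE mxE eq_mxvec_index sum_mxvec_index => <-.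
by apply: eq_bigr => a' _; apply: eq_bigr => b' _; rewrite !mxE.
Qed.

Lemma Vadj_Vcoef a b c d :
  \sum_a' \sum_b' Vadj a b a' b' * Vcoef a' b' c d = ((a == c) && (b == d))%:R.
Proof.
have VadjV : V^t* *m V = 1%:M by apply/mulmx1C/unitarymxP.
have := congr1 (fun M : 'M[C]_(n * n) => M (ix a b) (ix c d)) VadjV.
rewrite /= mxE mxE eq_mxvec_index sum_mxvec_index => <-.
by apply: eq_bigr => a' _; apply: eq_bigr => b' _; rewrite !mxE.
Qed.

Lemma act_VadjK G a b : act Vadj (act Vcoef G) a b = G a b.
Proof. exact: act_comp_id Vadj_Vcoef G a b. Qed.

Lemma act_VcoefK G a b : act Vcoef (act Vadj G) a b = G a b.
Proof. exact: act_comp_id Vcoef_Vadj G a b. Qed.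

Lemma act_Vadj_fixed G : (forall a b, act Vcoef G a b = G a b) ->
  forall a b, act Vadj G a b = G a b.
Proof. by move=> GV a b; rewrite -[RHS]act_VadjK; apply: eq_act => {}a {}b; rewrite GV. Qed.

Lemma act12_VadjK F a b c : act12 Vadj (act12 Vcoef F) a b c = F a b c.
Proof. exact: (act_VadjK (fun a b => F a b c)). Qed.

Lemma act23_VadjK F a b c : act23 Vadj (act23 Vcoef F) a b c = F a b c.
Proof. exact: (act_VadjK (fun b c => F a b c)). Qed.

Lemma act23_VcoefK F a b c : act23 Vcoef (act23 Vadj F) a b c = F a b c.
Proof. exact: (act_VcoefK (fun b c => F a b c)). Qed.

Lemma pentagon13 F a b c :
  act13 Vcoef (act23 Vcoef F) a b c = act12 Vadj (act23 Vcoef (act12 Vcoef F)) a b c.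
Proof. by rewrite -act12_VadjK; apply: eq_act12 => {}a {}b {}c; apply: pentagon. Qed.

Lemma pentagon_adj F a b c :
  act23 Vadj (act12 Vcoef (act13 Vcoef F)) a b c = act12 Vcoef (act23 Vadj F) a b c.
Proof.
rewrite -[RHS]act23_VadjK; apply: eq_act23 => {}a {}b {}c.
rewrite -pentagon; apply: eq_act12 => {}a {}b {}c.
by apply: eq_act13 => {}a {}b {}c; rewrite act23_VcoefK.
Qed.

(* Evaluate both sides of the pentagon equation on [x (x) y (x) z] and cancel
   a nonzero coordinate of [y]. *)
Lemma Hup_trans (x y z : 'cV[C]_n) : y != 0 -> Hup V x y -> Hup V y z -> Hup V x z.
Proof.
move=> y0 /HupP xy /HupP yz; apply/HupP.
pose F a b c := x a 0 * y b 0 * z c 0.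
have F23 a b c : act23 Vcoef F a b c = F a b c.
  rewrite (@act23_tensor _ _ (tcoef y z) (fun a => x a 0)) => [|*]; rewrite /F -mulrA //.
  by rewrite yz.
have F12 a b c : act12 Vcoef F a b c = F a b c.
  by rewrite (@act12_tensor _ _ (tcoef x y) (fun c => z c 0)) // xy.
have F13 a b c : act13 Vcoef F a b c = F a b c.
  rewrite -(eq_act13 _ F23) pentagon13.
  transitivity (act12 Vadj (act12 Vcoef F) a b c); last exact: act12_VadjK.
  by apply: eq_act12 => {}a {}b {}c; rewrite (eq_act23 _ F12) F23.
have [b yb] : exists b, y b 0 != 0.
  apply/existsP; apply: contraNT y0 => /existsPn y0; apply/eqP/colP => i.
  by rewrite mxE; apply/eqP/negbNE/y0.
move=> a c; have := F13 a b c.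
rewrite (@act13_tensor _ _ (tcoef x z) (fun b => y b 0)) => [|*]; last by rewrite /F mulrAC.
by rewrite /F /tcoef mulrAC => /(mulIf yb).
Qed.

Definition dot2 (H G : tensor2) := \sum_a \sum_b (H a b)^* * G a b.

Lemma dot2_conj H G : (dot2 H G)^* = dot2 G H.
Proof.
rewrite rmorph_sum; apply: eq_bigr => a _; rewrite rmorph_sum; apply: eq_bigr => b _.
by rewrite rmorphM /= conjCK mulrC.
Qed.

Lemma dot2_ge0 G : 0 <= dot2 G G.
Proof. by apply: sumr_ge0 => a _; apply: sumr_ge0 => b _; rewrite mulrC mul_conjC_ge0. Qed.

Lemma dot2_eq0 G : dot2 G G = 0 -> forall a b, G a b = 0.
Proof.
have term_ge0 (z : C) : 0 <= z^* * z by rewrite mulrC mul_conjC_ge0.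
have row_ge0 a : 0 <= \sum_b (G a b)^* * G a b by apply: sumr_ge0.
move=> /psumr_eq0P G0 a b; have /psumr_eq0P Ga0 := G0 (fun a _ => row_ge0 a) a isT.
have /eqP := Ga0 (fun b _ => term_ge0 (G a b)) b isT.
by rewrite mulrC mul_conjC_eq0 => /eqP.
Qed.

Lemma dot2_act_adjoint (M M' : kernel) :
  (forall a b a' b', M' a b a' b' = (M a' b' a b)^*) ->
  forall H G, dot2 H (act M G) = dot2 (act M' H) G.
Proof.
move=> M'E H G; rewrite /dot2 /act.
transitivity (\sum_a \sum_b \sum_a' \sum_b' (H a b)^* * M a b a' b' * G a' b').
  apply: eq_bigr => a _; apply: eq_bigr => b _; rewrite big_distrr.
  by apply: eq_bigr => a' _; rewrite big_distrr; apply: eq_bigr => b' _; exact: mulrA.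
rewrite sum4_exchange; apply: eq_bigr => a' _; apply: eq_bigr => b' _.
rewrite rmorph_sum big_distrl; apply: eq_bigr => a _.
rewrite rmorph_sum big_distrl; apply: eq_bigr => b _ /=.
by rewrite M'E rmorphM /= conjCK [_ * M _ _ _ _]mulrC.
Qed.

Lemma dot2_act_Vcoef H G : dot2 H (act Vcoef G) = dot2 (act Vadj H) G.
Proof. exact: dot2_act_adjoint. Qed.

Lemma dot2_act_Vadj H G : dot2 H (act Vadj G) = dot2 (act Vcoef H) G.
Proof. by apply: dot2_act_adjoint => *; rewrite /Vadj conjCK. Qed.

Lemma act_Vcoef_isometry G : dot2 (act Vcoef G) (act Vcoef G) = dot2 G G.
Proof.
rewrite dot2_act_Vcoef; apply: eq_bigr => a _; apply: eq_bigr => b _.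
by rewrite act_VadjK.
Qed.

(* [V] is an isometry, so [|V G - G|^2 = 2 |G|^2 - 2 Re <G, V G>] vanishes on
   the family. *)
Lemma act_fixed_family k (G : 'I_k -> tensor2) :
  \sum_i dot2 (G i) (act Vcoef (G i)) = \sum_i dot2 (G i) (G i) ->
  forall i a b, act Vcoef (G i) a b = G i a b.
Proof.
move=> GVG; pose D i a b := act Vcoef (G i) a b - G i a b.
have D_expand i : dot2 (D i) (D i) =
    dot2 (G i) (G i) *+ 2 - (dot2 (G i) (act Vcoef (G i)))^* - dot2 (G i) (act Vcoef (G i)).
  rewrite dot2_conj mulr2n -[X in _ = X + _ - _ - _]act_Vcoef_isometry /dot2 -big_split -!sumrB.
  apply: eq_bigr => a _; rewrite -big_split -!sumrB; apply: eq_bigr => b _.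
  by rewrite /D rmorphB /=; ring.
have D0 : \sum_i dot2 (D i) (D i) = 0.
  under eq_bigr do rewrite D_expand.
  have real_norm : (\sum_i dot2 (G i) (G i))^* = \sum_i dot2 (G i) (G i).
    by rewrite rmorph_sum; apply: eq_bigr => i _ /=; rewrite dot2_conj.
  by rewrite !sumrB sumrMnl -rmorph_sum GVG /= real_norm mulr2n -addrA -opprD subrr.
move=> i a b; apply/eqP; rewrite -subr_eq0; apply/eqP; move: a b; apply: dot2_eq0.
by move/psumr_eq0P: D0 => /(_ (fun i _ => dot2_ge0 (D i))) /(_ i isT).
Qed.

Definition contract1 (f : 'cV[C]_n) (F : tensor3) a b := \sum_p (f p 0)^* * F p a b.
Definition contract2 (f : 'cV[C]_n) (F : tensor3) p b := \sum_a (f a 0)^* * F p a b.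
Definition contract3 (f : 'cV[C]_n) (F : tensor3) a b := \sum_c (f c 0)^* * F a b c.

Lemma contract1_act23 M f F a b : contract1 f (act23 M F) a b = act M (contract1 f F) a b.
Proof.
rewrite /contract1 /act23 /act.
transitivity (\sum_p \sum_b' \sum_c' (f p 0)^* * (M a b b' c' * F p b' c')).
  by apply: eq_bigr => p _; rewrite big_distrr; apply: eq_bigr => b' _; rewrite big_distrr.
rewrite sum3_rotl; apply: eq_bigr => b' _; apply: eq_bigr => c' _.
by rewrite big_distrr; apply: eq_bigr => p _; rewrite mulrCA.
Qed.

Lemma contract2_act13 M f F p b : contract2 f (act13 M F) p b = act M (contract2 f F) p b.
Proof.
rewrite /contract2 /act13 /act.
transitivity (\sum_a \sum_p' \sum_b' (f a 0)^* * (M p b p' b' * F p' a b')).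
  by apply: eq_bigr => a _; rewrite big_distrr; apply: eq_bigr => p' _; rewrite big_distrr.
rewrite sum3_rotl; apply: eq_bigr => p' _; apply: eq_bigr => b' _.
by rewrite big_distrr; apply: eq_bigr => a _; rewrite mulrCA.
Qed.

Lemma contract3_act12 M f F a b : contract3 f (act12 M F) a b = act M (contract3 f F) a b.
Proof.
rewrite /contract3 /act12 /act.
transitivity (\sum_c \sum_a' \sum_b' (f c 0)^* * (M a b a' b' * F a' b' c)).
  by apply: eq_bigr => c _; rewrite big_distrr; apply: eq_bigr => a' _; rewrite big_distrr.
rewrite sum3_rotl; apply: eq_bigr => a' _; apply: eq_bigr => b' _.
by rewrite big_distrr; apply: eq_bigr => c _; rewrite mulrCA.
Qed.

Definition lslice (f : 'cV[C]_n) : 'M[C]_n :=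
  \matrix_(b, b') \sum_a \sum_a' (f a 0)^* * Vcoef a b a' b' * f a' 0.
Definition rslice (f : 'cV[C]_n) : 'M[C]_n :=
  \matrix_(a, a') \sum_b \sum_b' (f b 0)^* * Vcoef a b a' b' * f b' 0.

Lemma lslice_mulE f (x : 'cV[C]_n) b :
  (lslice f *m x) b 0 = \sum_a (f a 0)^* * act Vcoef (tcoef f x) a b.
Proof.
rewrite mxE; under eq_bigr do rewrite mxE.
transitivity (\sum_b' \sum_a \sum_a' (f a 0)^* * Vcoef a b a' b' * f a' 0 * x b' 0).
  apply: eq_bigr => b' _; rewrite big_distrl; apply: eq_bigr => a _.
  by rewrite big_distrl.
rewrite exchange_big; apply: eq_bigr => a _ /=.
rewrite /act /tcoef big_distrr exchange_big; apply: eq_bigr => a' _ /=.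
rewrite big_distrr; apply: eq_bigr => b' _ /=; ring.
Qed.

Lemma lslice_adj_mulE f (x : 'cV[C]_n) b :
  ((lslice f)^t* *m x) b 0 = \sum_a (f a 0)^* * act Vadj (tcoef f x) a b.
Proof.
rewrite mxE; under eq_bigr do rewrite !mxE rmorph_sum.
transitivity (\sum_b' \sum_a \sum_a' (f a' 0)^* * Vadj a' b a b' * f a 0 * x b' 0).
  apply: eq_bigr => b' _; rewrite big_distrl; apply: eq_bigr => a _.
  rewrite rmorph_sum big_distrl; apply: eq_bigr => a' _ /=.
  by rewrite !rmorphM /= conjCK /Vadj /Vcoef; ring.
rewrite sum3_rev; apply: eq_bigr => a' _ /=.
rewrite /act /tcoef big_distrr; apply: eq_bigr => a _ /=.
rewrite big_distrr; apply: eq_bigr => b' _ /=; ring.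
Qed.

Lemma rslice_mulE f (x : 'cV[C]_n) a :
  (rslice f *m x) a 0 = \sum_b (f b 0)^* * act Vcoef (tcoef x f) a b.
Proof.
rewrite mxE; under eq_bigr do rewrite mxE.
transitivity (\sum_a' \sum_b \sum_b' (f b 0)^* * Vcoef a b a' b' * f b' 0 * x a' 0).
  apply: eq_bigr => a' _; rewrite big_distrl; apply: eq_bigr => b _.
  by rewrite big_distrl.
rewrite exchange_big; apply: eq_bigr => b _ /=.
rewrite /act /tcoef big_distrr; apply: eq_bigr => a' _ /=.
rewrite big_distrr; apply: eq_bigr => b' _ /=; ring.
Qed.

Lemma rslice_adj_mulE f (x : 'cV[C]_n) a :
  ((rslice f)^t* *m x) a 0 = \sum_b (f b 0)^* * act Vadj (tcoef x f) a b.
Proof.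
rewrite mxE; under eq_bigr do rewrite !mxE rmorph_sum.
transitivity (\sum_a' \sum_b \sum_b' (f b' 0)^* * Vadj a b' a' b * f b 0 * x a' 0).
  apply: eq_bigr => a' _; rewrite big_distrl; apply: eq_bigr => b _.
  rewrite rmorph_sum big_distrl; apply: eq_bigr => b' _ /=.
  by rewrite !rmorphM /= conjCK /Vadj /Vcoef; ring.
rewrite sum3_rev; apply: eq_bigr => b' _ /=.
rewrite /act /tcoef big_distrr exchange_big; apply: eq_bigr => a' _ /=.
rewrite big_distrr; apply: eq_bigr => b _ /=; ring.
Qed.

Section Slices.
Variable f : 'cV[C]_n.
Hypothesis f_unit : ip f f = 1.
Hypothesis f_fixed : Hup V f f.

Lemma lslice_fixed x : Hup V f x -> lslice f *m x = x.
Proof.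
move=> /HupP fx; apply/colP => b; rewrite lslice_mulE.
under eq_bigr do rewrite fx /tcoef mulrA.
by rewrite -big_distrl /= -ip_normE f_unit mul1r.
Qed.

Lemma lslice_adj_fixed x : Hup V f x -> (lslice f)^t* *m x = x.
Proof.
move=> /HupP /act_Vadj_fixed fx; apply/colP => b; rewrite lslice_adj_mulE.
under eq_bigr do rewrite fx /tcoef mulrA.
by rewrite -big_distrl /= -ip_normE f_unit mul1r.
Qed.

Lemma rslice_fixed x : Hup V x f -> rslice f *m x = x.
Proof.
move=> /HupP xf; apply/colP => a; rewrite rslice_mulE.
under eq_bigr do rewrite xf /tcoef mulrCA.
by rewrite -big_distrr /= -ip_normE f_unit mulr1.
Qed.

Lemma rslice_adj_fixed x : Hup V x f -> (rslice f)^t* *m x = x.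
Proof.
move=> /HupP /act_Vadj_fixed xf; apply/colP => a; rewrite rslice_adj_mulE.
under eq_bigr do rewrite xf /tcoef mulrCA.
by rewrite -big_distrr /= -ip_normE f_unit mulr1.
Qed.

(* [<f (x) x, V (f (x) x)> = <x, lslice f x> = <x, x> = |f (x) x|^2], so the
   isometry [V] fixes [f (x) x]. *)
Lemma Hup_lslice_fixed x : lslice f *m x = x -> Hup V f x.
Proof.
move=> Tx; apply/HupP => a b.
apply: (@act_fixed_family 1 (fun _ => tcoef f x) _ ord0 a b); rewrite !big_ord1.
transitivity (\sum_b (x b 0)^* * (lslice f *m x) b 0).
  rewrite /dot2 exchange_big; apply: eq_bigr => b' _; rewrite lslice_mulE big_distrr.
  by apply: eq_bigr => a' _; rewrite /tcoef rmorphM /=; ring.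
rewrite Tx -[LHS]mul1r -f_unit ip_normE big_distrl; apply: eq_bigr => a' _.
by rewrite big_distrr; apply: eq_bigr => b' _ /=; rewrite /tcoef rmorphM /=; ring.
Qed.

Lemma Hup_rslice_fixed x : rslice f *m x = x -> Hup V x f.
Proof.
move=> Sx; apply/HupP => a b.
apply: (@act_fixed_family 1 (fun _ => tcoef x f) _ ord0 a b); rewrite !big_ord1.
transitivity (\sum_a (x a 0)^* * (rslice f *m x) a 0).
  apply: eq_bigr => a' _; rewrite rslice_mulE big_distrr.
  by apply: eq_bigr => b' _; rewrite /tcoef rmorphM /=; ring.
rewrite Sx -[LHS]mul1r -f_unit ip_normE big_distrr; apply: eq_bigr => a' _.
by rewrite big_distrl; apply: eq_bigr => b' _ /=; rewrite /tcoef rmorphM /=; ring.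
Qed.

Lemma lslice_idem : lslice f *m lslice f = lslice f.
Proof.
apply: mulmx_idem => x; apply/colP => b0; move/HupP: f_fixed => ff.
pose F (u v w : I) := f u 0 * f v 0 * x w 0.
have F23 p a b : act23 Vcoef F p a b = f p 0 * act Vcoef (tcoef f x) a b.
  by rewrite (@act23_tensor _ F (tcoef f x) (fun u => f u 0)) // => *; rewrite /F mulrA.
have F12 p a b : act12 Vcoef F p a b = F p a b.
  by rewrite (@act12_tensor _ F (tcoef f f) (fun b => x b 0)) // ff.
have Tx_coef p b : tcoef f (lslice f *m x) p b = contract2 f (act23 Vcoef F) p b.
  rewrite /tcoef lslice_mulE /contract2 big_distrr; apply: eq_bigr => a _.
  by rewrite F23 mulrCA.
have TTx_coef p b : act Vcoef (tcoef f (lslice f *m x)) p b =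
    contract2 f (act12 Vadj (act23 Vcoef F)) p b.
  rewrite (eq_act _ Tx_coef) -contract2_act13; apply: eq_bigr => a _.
  by rewrite pentagon13 (eq_act12 _ (eq_act23 _ F12)).
rewrite lslice_mulE; under eq_bigr do rewrite TTx_coef /contract2 big_distrr.
transitivity (dot2 (tcoef f f) (act Vadj (fun p a => act23 Vcoef F p a b0))).
  by apply: eq_bigr => p _; apply: eq_bigr => a _; rewrite /tcoef rmorphM /= mulrA.
rewrite dot2_act_Vadj /dot2; under eq_bigr do under eq_bigr do rewrite ff F23 /tcoef rmorphM /=.
rewrite lslice_mulE -[RHS]mul1r -f_unit ip_normE big_distrl; apply: eq_bigr => p _ /=.
by rewrite big_distrr; apply: eq_bigr => a _ /=; ring.
Qed.

Lemma rslice_idem : rslice f *m rslice f = rslice f.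
Proof.
apply: mulmx_idem => x; apply/colP => a0; move/HupP: f_fixed => ff.
pose F (u v w : I) := x u 0 * f v 0 * f w 0.
have F13 a b c : act13 Vcoef F a b c = act Vcoef (tcoef x f) a c * f b 0.
  by rewrite (@act13_tensor _ F (tcoef x f) (fun u => f u 0)) // => *; rewrite /F mulrAC.
have F23 a b c : act23 Vcoef F a b c = F a b c.
  rewrite (@act23_tensor _ F (tcoef f f) (fun a => x a 0)) => [|*]; rewrite /F -mulrA //.
  by rewrite ff.
have F12 a b c : act12 Vcoef F a b c = act Vcoef (tcoef x f) a b * f c 0.
  by rewrite (@act12_tensor _ F (tcoef x f) (fun u => f u 0)).
have Sx_coef a b : tcoef (rslice f *m x) f a b = contract3 f (act13 Vcoef F) a b.
  rewrite /tcoef rslice_mulE /contract3 big_distrl; apply: eq_bigr => c _.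
  by rewrite F13 mulrA.
have SSx_coef a b : act Vcoef (tcoef (rslice f *m x) f) a b =
    contract3 f (act23 Vcoef (act12 Vcoef F)) a b.
  rewrite (eq_act _ Sx_coef) -contract3_act12; apply: eq_bigr => c _.
  by rewrite -pentagon (eq_act12 _ (eq_act13 _ F23)).
rewrite rslice_mulE; under eq_bigr do rewrite SSx_coef /contract3 big_distrr.
transitivity (dot2 (tcoef f f) (act Vcoef (fun b c => act12 Vcoef F a0 b c))).
  by apply: eq_bigr => b _; apply: eq_bigr => c _; rewrite /tcoef rmorphM /= mulrA.
rewrite dot2_act_Vcoef /dot2.
under eq_bigr do under eq_bigr do rewrite (act_Vadj_fixed ff) F12 /tcoef rmorphM /=.
rewrite rslice_mulE -[RHS]mulr1 -f_unit ip_normE big_distrl; apply: eq_bigr => b _ /=.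
by rewrite big_distrr; apply: eq_bigr => c _ /=; rewrite /tcoef; ring.
Qed.

Lemma lslice_selfadj : (lslice f)^t* = lslice f.
Proof.
apply: selfadj_idem; first exact: lslice_idem.
by move=> x /Hup_lslice_fixed /lslice_adj_fixed; apply.
Qed.

Lemma rslice_selfadj : (rslice f)^t* = rslice f.
Proof.
apply: selfadj_idem; first exact: rslice_idem.
by move=> x /Hup_rslice_fixed /rslice_adj_fixed; apply.
Qed.
End Slices.

Lemma lslice_preserves f x w : Hup V x w -> Hup V f w -> Hup V (lslice f *m x) w.
Proof.
move=> /HupP xw /HupP fw; apply/HupP => b0 c0.
pose F (u v z : I) := f u 0 * x v 0 * w z 0.
have F12 p b c : act12 Vcoef F p b c = act Vcoef (tcoef f x) p b * w c 0.
  by rewrite (@act12_tensor _ F (tcoef f x) (fun u => w u 0)).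
have F23 p b c : act23 Vcoef F p b c = F p b c.
  rewrite (@act23_tensor _ F (tcoef x w) (fun u => f u 0)) => [|*]; rewrite /F -mulrA //.
  by rewrite xw.
have F13 p b c : act13 Vcoef F p b c = F p b c.
  rewrite (@act13_tensor _ F (tcoef f w) (fun u => x u 0)) => [|*]; rewrite /F mulrAC //.
  by rewrite fw.
have Tx_coef b c : tcoef (lslice f *m x) w b c = contract1 f (act12 Vcoef F) b c.
  rewrite /tcoef lslice_mulE /contract1 big_distrl; apply: eq_bigr => p _.
  by rewrite F12 mulrA.
rewrite (eq_act _ Tx_coef) -contract1_act23 Tx_coef; apply: eq_bigr => p _; congr (_ * _).
rewrite -pentagon; apply: eq_act12 => {}p {}b {}c.
by rewrite (eq_act13 _ F23) F13.
Qed.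

Lemma rslice_adj_preserves f x w :
  Hup V w f -> Hup V w x -> Hup V w ((rslice f)^t* *m x).
Proof.
move=> /HupP wf /HupP wx; apply/HupP => a0 b0.
pose F (u v z : I) := w u 0 * x v 0 * f z 0.
have F23 a b c : act23 Vadj F a b c = w a 0 * act Vadj (tcoef x f) b c.
  by rewrite (@act23_tensor _ F (tcoef x f) (fun u => w u 0)) // => *; rewrite /F mulrA.
have F13 a b c : act13 Vcoef F a b c = F a b c.
  rewrite (@act13_tensor _ F (tcoef w f) (fun u => x u 0)) => [|*]; rewrite /F mulrAC //.
  by rewrite wf.
have F12 a b c : act12 Vcoef F a b c = F a b c.
  by rewrite (@act12_tensor _ F (tcoef w x) (fun u => f u 0)) // wx.
have Sx_coef a b : tcoef w ((rslice f)^t* *m x) a b = contract3 f (act23 Vadj F) a b.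
  rewrite /tcoef rslice_adj_mulE /contract3 big_distrr; apply: eq_bigr => c _.
  by rewrite F23 mulrCA.
rewrite (eq_act _ Sx_coef) -contract3_act12 Sx_coef; apply: eq_bigr => c _; congr (_ * _).
rewrite -pentagon_adj; apply: eq_act23 => {}a {}b {}c.
by rewrite (eq_act12 _ F13) F12.
Qed.

Definition trslice : 'M[C]_n := \matrix_(j, k) \sum_i Vcoef i j i k.

Lemma act_delta M i l a b : act M (fun a b => (a == i)%:R * (b == l)%:R) a b = M a b i l.
Proof.
rewrite /act -(sum_deltaC (fun a' => M a b a' l) i); apply: eq_bigr => a' _.
rewrite -(sum_deltaC (fun b' => M a b a' b') l) big_distrr.
by apply: eq_bigr => b' _ /=; ring.
Qed.

(* [pentagon13] on the basis vector [e_i (x) e_l (x) e_k], at coordinate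
   [(i, l, j)]. *)
Lemma pentagon_basis i l j k :
  \sum_z Vcoef i j i z * Vcoef l z l k =
  \sum_x \sum_y Vadj i l x y * \sum_y' Vcoef y j y' k * Vcoef x y' i l.
Proof.
pose F (x y z : I) : C := (x == i)%:R * (y == l)%:R * (z == k)%:R.
have F23 x y z : act23 Vcoef F x y z = (x == i)%:R * Vcoef y z l k.
  rewrite (@act23_tensor _ F (fun y z => (y == l)%:R * (z == k)%:R) (fun x => (x == i)%:R)).
    by rewrite act_delta.
  by move=> *; rewrite /F mulrA.
have F12 x y z : act12 Vcoef F x y z = Vcoef x y i l * (z == k)%:R.
  rewrite (@act12_tensor _ F (fun x y => (x == i)%:R * (y == l)%:R) (fun z => (z == k)%:R)) //.
  by rewrite act_delta.
have F1223 x y z : act23 Vcoef (act12 Vcoef F) x y z = \sum_y' Vcoef y z y' k * Vcoef x y' i l.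
  rewrite /act23; apply: eq_bigr => y' _; under eq_bigr do rewrite F12.
  rewrite -(sum_deltaC (fun z' => Vcoef y z y' z' * Vcoef x y' i l) k).
  by apply: eq_bigr => z' _ /=; ring.
transitivity (act13 Vcoef (act23 Vcoef F) i l j).
  rewrite /act13; under [RHS]eq_bigr do under eq_bigr do rewrite F23.
  rewrite [RHS]exchange_big; apply: eq_bigr => z _.
  rewrite -(sum_deltaC (fun x => Vcoef i j x z * Vcoef l z l k) i).
  by apply: eq_bigr => x _ /=; ring.
rewrite pentagon13; apply: eq_bigr => x _; apply: eq_bigr => y _.
by rewrite F1223.
Qed.

Lemma trslice_sq : trslice *m trslice = n%:R *: trslice.
Proof.
apply/matrixP => j k; rewrite !mxE.
transitivity (\sum_i \sum_l \sum_z Vcoef i j i z * Vcoef l z l k).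
  rewrite [RHS]sum3_rotr; apply: eq_bigr => z _.
  by rewrite !mxE big_distrl; apply: eq_bigr => i _; rewrite big_distrr.
under eq_bigr do under eq_bigr do rewrite pentagon_basis.
rewrite sum4_exchange.
transitivity (\sum_(x : I) \sum_(y : I) Vcoef y j y k); last first.
  by rewrite sumr_const card_ord -mulr_natl; ring.
apply: eq_bigr => x _; apply: eq_bigr => y _.
transitivity (\sum_y' Vcoef y j y' k * ((x == x) && (y' == y))%:R).
  transitivity (\sum_i \sum_l \sum_y' Vcoef y j y' k * (Vcoef x y' i l * Vadj i l x y)).
    apply: eq_bigr => i _; apply: eq_bigr => l _; rewrite big_distrr.
    by apply: eq_bigr => y' _ /=; ring.
  rewrite sum3_rotr; apply: eq_bigr => y' _; rewrite -Vcoef_Vadj big_distrr.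
  by apply: eq_bigr => i _; rewrite big_distrr.
rewrite eqxx -(sum_delta (fun y' => Vcoef y j y' k) y).
by apply: eq_bigr => y' _; rewrite eq_sym.
Qed.

Lemma trslice_cofixed x : trslice *m x = n%:R *: x -> forall y, Hup V y x.
Proof.
move=> Yx; pose G (i : I) := tcoef (delta_mx i 0) x.
have dot2_G i K : dot2 (G i) K = \sum_b (x b 0)^* * K i b.
  rewrite /dot2 (bigD1 i) //= [X in _ + X]big1 ?addr0 => [|a ai].
    by apply: eq_bigr => b _; rewrite /G /tcoef mxE !eqxx mul1r.
  by apply: big1 => b _; rewrite /G /tcoef mxE (negbTE ai) mul0r rmorph0 mul0r.
have basis_fixed i : Hup V (delta_mx i 0) x.
  apply/HupP; apply: (act_fixed_family (G := G)); under eq_bigr do rewrite !dot2_G.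
  transitivity (\sum_b (x b 0)^* * (trslice *m x) b 0).
    rewrite exchange_big; apply: eq_bigr => b _; rewrite mxE -big_distrr /=; congr (_ * _).
    under [RHS]eq_bigr do rewrite mxE big_distrl.
    rewrite [RHS]exchange_big; apply: eq_bigr => i' _ /=.
    rewrite /act (bigD1 i') //= [X in _ + X]big1 ?addr0 => [|a ai].
      by apply: eq_bigr => b' _; rewrite /G /tcoef mxE !eqxx mul1r.
    by apply: big1 => b' _; rewrite /G /tcoef mxE (negbTE ai) mul0r mulr0.
  transitivity (\sum_(i' : I) \sum_b (x b 0)^* * x b 0).
    rewrite Yx sumr_const card_ord -[RHS]mulr_natl mulr_sumr; apply: eq_bigr => b _.
    by rewrite mxE mulrCA.
  apply: eq_bigr => i' _; rewrite dot2_G; apply: eq_bigr => b _.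
  by rewrite /G /tcoef mxE !eqxx mul1r.
move=> y; rewrite [y]matrix_sum_delta.
apply: (big_ind (fun z => Hup V z x)) => [|u v|i _]; [exact: Hup0l | exact: HupDl |].
apply: (big_ind (fun z => Hup V z x)) => [|u v|j _]; [exact: Hup0l | exact: HupDl |].
by rewrite ord1; apply: HupZl.
Qed.

Lemma ip_trslice x : ip (trslice *m x) x = \tr (rslice x).
Proof.
rewrite ipE /mxtrace; under eq_bigr do rewrite mxE big_distrl.
under [RHS]eq_bigr do rewrite mxE.
transitivity (\sum_j \sum_k \sum_i (x j 0)^* * Vcoef i j i k * x k 0).
  apply: eq_bigr => j _; apply: eq_bigr => k _ /=; rewrite mxE !big_distrl.
  by apply: eq_bigr => i _ /=; ring.
by rewrite sum3_rotr.
Qed.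

Section FixedComponents.
Variable W : 'cV[C]_n -> Prop.

Lemma lfixed_component v a a' : (forall y, Hup V y v) -> v = a + a' ->
  (forall w, W w -> Hup V a w) ->
  (forall x, (forall w, W w -> Hup V x w) -> ip a' x = 0) ->
  forall h, Hup V h h -> ip h h = 1 -> (forall w, W w -> Hup V h w) -> Hup V h a.
Proof.
move=> v_cofixed va Pa a'_perp h hh h_unit Ph; apply: (Hup_lslice_fixed h_unit).
apply: (selfadj_fix_component (lin_closed_Hupl W) (lslice_selfadj h_unit hh)) Pa a'_perp _.
  by move=> x Px w Ww; apply: lslice_preserves; [apply: Px | apply: Ph].
by rewrite -va; apply/lslice_fixed/v_cofixed.
Qed.

Lemma rfixed_component v b b' : (forall y, Hup V v y) -> v = b + b' ->
  (forall w, W w -> Hup V w b) ->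
  (forall x, (forall w, W w -> Hup V w x) -> ip b' x = 0) ->
  forall h, Hup V h h -> ip h h = 1 -> (forall w, W w -> Hup V w h) -> Hup V b h.
Proof.
move=> v_fixed vb Pb b'_perp h hh h_unit Ph; apply: (Hup_rslice_fixed h_unit).
have hS := rslice_selfadj h_unit hh.
apply: (selfadj_fix_component (lin_closed_Hupr W) hS) Pb b'_perp _.
  by move=> x Px w Ww; rewrite -hS; apply: rslice_adj_preserves; [apply: Ph | apply: Px].
by rewrite -vb; apply/rslice_fixed/v_fixed.
Qed.
End FixedComponents.

Variable e : 'cV[C]_n.
Hypothesis e_fixed : fixed_vector V e.
Hypothesis e_unit : ip e e = 1.

Lemma rslice_fixed_vector_neq0 : rslice e != 0.
Proof.
have e_neq0 : e != 0 by apply: contra_eqN e_unit => /eqP ->; rewrite ip0l eq_sym oner_eq0.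
by apply: contraNneq e_neq0 => S0; rewrite -(rslice_fixed e_unit (e_fixed e)) S0 mul0mx.
Qed.

Lemma meet_pre_subgroup f f' : pre_subgroup V e f -> pre_subgroup V e f' ->
  exists2 g, pre_subgroup V e g & forall w, Hup V f w /\ Hup V f' w <-> Hup V g w.
Proof.
move=> [ff _ fff] [f'f' _ f'f'f']; pose W w := Hup V f w /\ Hup V f' w.
have v_cofixed : forall y, Hup V y (trslice *m e).
  by apply: trslice_cofixed; rewrite mulmxA trslice_sq -scalemxAl.
have [a [a' [va Pa a'_perp]]] :=
  orthogonal_decomposition (lin_closed_Hupl W) (trslice *m e).
have fa : Hup V f a by apply: (lfixed_component v_cofixed va Pa a'_perp fff ff) => w [].
have f'a : Hup V f' a by apply: (lfixed_component v_cofixed va Pa a'_perp f'f'f' f'f') => w [].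
have ae_gt0 : 0 < ip a e.
  have Pe : forall w, W w -> Hup V e w by move=> w _; apply: e_fixed.
  rewrite -[ip a e]addr0 -[X in _ + X](a'_perp e Pe) -ipDl -va ip_trslice.
  exact: mxtrace_proj_gt0 (rslice_selfadj e_unit (e_fixed e))
    (rslice_idem e_unit (e_fixed e)) rslice_fixed_vector_neq0.
have [c [gg ge]] := ip_normalize ae_gt0.
have g_neq0 : c *: a != 0 by apply: contraTneq ge => ->; rewrite ip0l ltxx.
exists (c *: a); first by split => //; apply/HupZl/HupZr/Pa.
move=> w; split=> [/Pa/HupZl //|gw].
by split; apply: (Hup_trans g_neq0) gw; apply: HupZr.
Qed.

Lemma join_pre_subgroup f f' : pre_subgroup V e f -> pre_subgroup V e f' ->
  exists2 g, pre_subgroup V e g & forall w, Hup V w f /\ Hup V w f' <-> Hup V w g.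
Proof.
move=> [ff fe fff] [f'f' _ f'f'f']; pose W w := Hup V w f /\ Hup V w f'.
have [b [b' [eb Pb b'_perp]]] := orthogonal_decomposition (lin_closed_Hupr W) e.
have bf : Hup V b f by apply: (rfixed_component e_fixed eb Pb b'_perp fff ff) => w [].
have bf' : Hup V b f' by apply: (rfixed_component e_fixed eb Pb b'_perp f'f'f' f'f') => w [].
have bf_neq0 : ip b f != 0.
  have Pf : forall w, W w -> Hup V w f by move=> w [].
  by rewrite -[ip b f]addr0 -[X in _ + X](b'_perp f Pf) -ipDl -eb ip_conj conjC_eq0 gt_eqF.
have b_neq0 : b != 0 by apply: contraNneq bf_neq0 => ->; rewrite ip0l.
have be_gt0 : 0 < ip b e.
  by rewrite eb ipDr (ip_conj b' b) b'_perp // rmorph0 addr0 ip_gt0.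
have [c [gg ge]] := ip_normalize be_gt0.
have g_neq0 : c *: b != 0 by apply: contraTneq ge => ->; rewrite ip0l ltxx.
exists (c *: b); first by split => //; apply/HupZl/HupZr/Pb.
move=> w; split=> [/Pb/HupZr //|wg].
by split; apply: (Hup_trans g_neq0) wg _; apply: HupZl.
Qed.
End MultiplicativeUnitary.

Theorem corollary3p14 (C : numClosedFieldType) (n : nat) (V : 'M[C]_(n * n))
  (e : 'cV[C]_n) :
  multiplicative_unitary V -> multiplicity_one V ->
  fixed_vector V e -> ip e e = 1 ->
  forall f f' : 'cV[C]_n, pre_subgroup V e f -> pre_subgroup V e f' ->
  exists g g' : 'cV[C]_n,
    [/\ pre_subgroup V e g, pre_subgroup V e g',
        (forall eta, Hup V f eta /\ Hup V f' eta <-> Hup V g eta),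
        (forall eta, Hdown V f eta /\ Hdown V f' eta <-> Hdown V g' eta) &
        (* g = inf(f, f') and g' = sup(f, f') for \prec among pre-subgroups *)
        ([/\ prec V g f, prec V g f' &
             forall h, pre_subgroup V e h -> prec V h f -> prec V h f' -> prec V h g] /\
         [/\ prec V f g', prec V f' g' &
             forall h, pre_subgroup V e h -> prec V f h -> prec V f' h -> prec V g' h])].
Proof.
move=> [V_unitary V_pentagon] _ e_fixed e_unit f f' pf pf'.
have [g pg Hg] := meet_pre_subgroup V_unitary V_pentagon e_fixed e_unit pf pf'.
have [g' pg' Hg'] := join_pre_subgroup V_unitary V_pentagon e_fixed pf pf'.
have [gf gf'] : Hup V f g /\ Hup V f' g by case: pg => _ _ /Hg.
have [g'f g'f'] : Hup V g' f /\ Hup V g' f' by case: pg' => _ _ /Hg'.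
exists g, g'; split => //; split; split => // h _.
- by move=> hf hf'; apply/Hg.
- by move=> fh f'h; apply/Hg'.
Qed.
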